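(* Let $k$ be a positive integer, $a_1>a_2>\cdots>a_{k+2}$ real numbers in $[a,b]$, and $w_1,\dots,w_{k+2}$ real weights with $w_1\ge 0$ and $(-1)^kw_{k+2}\ge 0$, such that $\sum_{i=1}^{k+2}w_ia_i^j=0$ for all integers $0\le j<k$. Then $\sum_{i=1}^{k+2}w_if(a_i)\ge 0$ for every $k$ times differentiable $f:[a,b]\to\mathbb{R}$ with $f^{(k)}\ge 0$. *)

From Stdlib Require Import Reals.
Open Scope R_scope.

(* [kdiff_on k a b f g]: f is k times differentiable on [a,b], with
   g i its i-th derivative (g 0 = f on [a,b]); derivatives are taken
   relative to the domain [a,b] (one-sided at the endpoints), via Stdlib's D_in. *)
Definition kdiff_on (k : nat) (a b : R) (f : R -> R) (g : nat -> R -> R) : Prop :=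
  (forall x, a <= x <= b -> g 0%nat x = f x) /\
  (forall (i : nat) (x : R), (i < k)%nat -> a <= x <= b ->
      D_in (g i) (g (S i)) (fun y => a <= y <= b) x).

(* Let x_0 > ... > x_n be points of [a,b] and w_0, ..., w_n weights whose
   moments sum_i w_i x_i^j vanish for j < n.  If w_0 >= 0, or if
   (-1)^n w_n >= 0, then sum_i w_i f(x_i) >= 0 for every n times
   differentiable f with f^(n) >= 0.  Both facts are proved by induction on n:
   since sum_i w_i = 0, the mean value theorem applied to
   t |-> sum_i w_i f(c + t (x_i - c)) gives, for some 0 < xi < 1,
     sum_i w_i f(x_i) = sum_i w_i (x_i - c) f'(c + xi (x_i - c)).
   Taking c to be the last (resp. first) point, the new weights w_i (x_i - c)
   vanish at that point, so they live on n points; they keep the sign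
   condition and have vanishing moments up to degree n - 1, so the induction
   hypothesis applies to f'.

   The theorem (k + 2 points, k vanishing moments) follows by writing
   w = u + v, where u is w_0 times divided-difference weights on the first
   k + 1 points and v is supported on the last k + 1 points: u falls under
   the first case and v under the second. *)

From Stdlib Require Import Reals Lra Lia Psatz.
Open Scope R_scope.

Definition moments_vanish (m n : nat) (x w : nat -> R) : Prop :=
  forall j : nat, (j < m)%nat -> sum_f_R0 (fun i => w i * x i ^ j) n = 0.

Definition strictly_decreasing (n : nat) (x : nat -> R) : Prop :=
  forall i : nat, (i < n)%nat -> x (S i) < x i.

Definition points_in (a b : R) (n : nat) (x : nat -> R) : Prop :=
  forall i : nat, (i <= n)%nat -> a <= x i <= b.

Definition derivative_chain (n : nat) (a b : R) (g : nat -> R -> R) : Prop :=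
  forall (i : nat) (y : R), (i < n)%nat -> a <= y <= b ->
    D_in (g i) (g (S i)) (fun z => a <= z <= b) y.

Lemma sum_drop_last (F : nat -> R) (n : nat) :
  F (S n) = 0 -> sum_f_R0 F (S n) = sum_f_R0 F n.
Proof. intros H0; rewrite tech5, H0; ring. Qed.

Lemma sum_drop_first (F : nat -> R) (n : nat) :
  F 0%nat = 0 -> sum_f_R0 F (S n) = sum_f_R0 (fun i => F (S i)) n.
Proof. intros H0; rewrite decomp_sum by lia; simpl pred; rewrite H0; ring. Qed.

Lemma strictly_decreasing_lt (n : nat) (x : nat -> R) :
  strictly_decreasing n x ->
  forall i j : nat, (i < j)%nat -> (j <= n)%nat -> x j < x i.
Proof.
  intros Hx i j Hij; induction j as [|j IHj]; [lia|]; intros Hj.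
  destruct (Nat.eq_dec i j) as [->|Hne]; [apply Hx; lia|].
  apply Rlt_trans with (x j); [apply Hx; lia | apply IHj; lia].
Qed.

Inductive poly_le : nat -> (R -> R) -> Prop :=
| poly_const d c : poly_le d (fun _ => c)
| poly_add d p q : poly_le d p -> poly_le d q -> poly_le d (fun y => p y + q y)
| poly_scal d al p : poly_le d p -> poly_le d (fun y => al * p y)
| poly_mulX d p : poly_le d p -> poly_le (S d) (fun y => y * p y)
| poly_ext d p q : poly_le d p -> (forall y, p y = q y) -> poly_le d q.

Lemma poly_le_S (d : nat) (p : R -> R) : poly_le d p -> poly_le (S d) p.
Proof.
  induction 1.
  - apply poly_const.
  - apply poly_add; assumption.
  - apply poly_scal; assumption.
  - apply poly_mulX; assumption.
  - eapply poly_ext; eassumption.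
Qed.

Lemma poly_annihilated (d : nat) (p : R -> R) : poly_le d p ->
  forall (m n : nat) (x w : nat -> R), (d < m)%nat -> moments_vanish m n x w ->
  sum_f_R0 (fun i => w i * p (x i)) n = 0.
Proof.
  induction 1 as [d c|d p q _ IHp _ IHq|d al p _ IHp|d p _ IHp|d p q _ IHp Hpq];
    intros m n x w Hdm Hw.
  - rewrite (sum_eq _ (fun i => w i * x i ^ 0 * c)) by (intros; simpl; ring).
    rewrite <- scal_sum, (Hw 0%nat) by lia; ring.
  - rewrite (sum_eq _ (fun i => w i * p (x i) + w i * q (x i))) by (intros; ring).
    rewrite plus_sum, (IHp m), (IHq m) by assumption; ring.
  - rewrite (sum_eq _ (fun i => w i * p (x i) * al)) by (intros; ring).
    rewrite <- scal_sum, (IHp m) by assumption; ring.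
  - rewrite (sum_eq _ (fun i => (w i * x i) * p (x i))) by (intros; ring).
    apply (IHp (pred m)); [lia|].
    intros j Hj; rewrite <- (Hw (S j)) by lia.
    apply sum_eq; intros; simpl; ring.
  - rewrite (sum_eq _ (fun i => w i * p (x i))) by (intros; rewrite Hpq; ring).
    apply (IHp m); assumption.
Qed.

Lemma poly_mul_affine (d : nat) (q : R -> R) (al be : R) :
  poly_le d q -> poly_le (S d) (fun y => (al * y + be) * q y).
Proof.
  intros Hq; eapply poly_ext.
  - apply poly_add; [apply poly_mulX, (poly_scal _ al _ Hq)|].
    apply poly_le_S, (poly_scal _ be _ Hq).
  - intros; simpl; ring.
Qed.

Lemma poly_affine_pow (j : nat) (al be : R) : poly_le j (fun y => (al * y + be) ^ j).
Proof.
  induction j as [|j IHj].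
  - eapply poly_ext; [apply (poly_const 0 1)|intros; simpl; ring].
  - eapply poly_ext; [apply (poly_mul_affine _ _ al be IHj)|intros; simpl; ring].
Qed.

(* [pow_quot z j y] = (y^j - z^j) / (y - z), a polynomial of degree j - 1 in y. *)
Fixpoint pow_quot (z : R) (j : nat) (y : R) : R :=
  match j with O => 0 | S j => y * pow_quot z j y + z ^ j end.

Lemma pow_sub_factor (z y : R) (j : nat) : y ^ j - z ^ j = (y - z) * pow_quot z j y.
Proof.
  induction j as [|j IHj]; simpl; [ring|].
  replace (y * y ^ j - z * z ^ j) with (y * (y ^ j - z ^ j) + (y - z) * z ^ j) by ring.
  rewrite IHj; ring.
Qed.

Lemma poly_pow_quot (z : R) (j : nat) : poly_le j (pow_quot z (S j)).
Proof.
  induction j as [|j IHj].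
  - eapply poly_ext; [apply (poly_const 0 1)|intros; simpl; ring].
  - apply poly_add; [apply poly_mulX, IHj | apply poly_const].
Qed.

(* Divided-difference weights: on n + 1 distinct points there are weights
   with u_0 = 1 annihilating all polynomials of degree < n.  Adding the point
   x_(n+1) = z, the weights e_i = (x_0 - z) u_i / (x_i - z) (i <= n),
   completed by e_(n+1) = - sum e_i, work one degree higher, because
   e_i (x_i^j - z^j) = (x_0 - z) u_i pow_quot z j (x_i). *)
Lemma divided_difference_weights (n : nat) (x : nat -> R) :
  strictly_decreasing n x ->
  exists u : nat -> R, u 0%nat = 1 /\ moments_vanish n n x u.
Proof.
  revert x; induction n as [|n IHn]; intros x Hx.
  { exists (fun _ => 1); split; [reflexivity | intros j Hj; lia]. }
  destruct (IHn x) as [u [Hu0 Hu]]; [intros i Hi; apply Hx; lia|].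
  set (z := x (S n)).
  assert (Hne : forall i, (i <= n)%nat -> x i - z <> 0).
  { intros i Hi. assert (x (S n) < x i) by (apply (strictly_decreasing_lt (S n)); auto; lia).
    unfold z; lra. }
  set (e := fun i => (x 0%nat - z) * u i / (x i - z)).
  exists (fun i => if (i <=? n)%nat then e i else - sum_f_R0 e n); split.
  { simpl; unfold e; rewrite Hu0; field; apply Hne; lia. }
  intros j Hj. rewrite tech5.
  replace (S n <=? n)%nat with false by (symmetry; apply Nat.leb_gt; lia).
  rewrite (sum_eq _ (fun i => e i * x i ^ j)).
  2:{ intros i Hi; replace (i <=? n)%nat with true by (symmetry; apply Nat.leb_le; lia); auto. }
  fold z.
  assert (Hsplit : sum_f_R0 (fun i => e i * x i ^ j) n + - sum_f_R0 e n * z ^ j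
                   = sum_f_R0 (fun i => e i * (x i ^ j - z ^ j)) n).
  { rewrite (sum_eq (fun i => e i * (x i ^ j - z ^ j))
                    (fun i => e i * x i ^ j - e i * z ^ j)) by (intros; ring).
    rewrite minus_sum, <- (scal_sum e n (z ^ j)); ring. }
  rewrite Hsplit.
  rewrite (sum_eq _ (fun i => ((x 0%nat - z) * u i) * pow_quot z j (x i))).
  2:{ intros i Hi; rewrite pow_sub_factor; unfold e; field; apply Hne; auto. }
  destruct j as [|j].
  { rewrite (sum_eq _ (fun i => u i * 0)) by (intros; simpl; ring).
    rewrite <- scal_sum; ring. }
  apply (poly_annihilated j _ (poly_pow_quot z j) n); [lia|].
  intros j' Hj'.
  rewrite (sum_eq _ (fun i => u i * x i ^ j' * (x 0%nat - z))) by (intros; ring).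
  rewrite <- scal_sum, Hu by lia; ring.
Qed.

(* Functions differentiable relative to [a,b] are extended to R through the
   clamping map onto [a,b]; the extension is continuous everywhere and has
   the same derivative at interior points. *)
Definition clamp (a b y : R) : R := Rmax a (Rmin b y).

Lemma clamp_in (a b y : R) : a <= b -> a <= clamp a b y <= b.
Proof. intros; unfold clamp, Rmax, Rmin; repeat destruct Rle_dec; lra. Qed.

Lemma clamp_id (a b y : R) : a <= y <= b -> clamp a b y = y.
Proof. intros; unfold clamp, Rmax, Rmin; repeat destruct Rle_dec; lra. Qed.

Lemma clamp_lipschitz (a b y z : R) :
  a <= b -> Rabs (clamp a b y - clamp a b z) <= Rabs (y - z).
Proof.
  intros; unfold clamp, Rmax, Rmin, Rabs.
  repeat destruct Rle_dec; repeat destruct Rcase_abs; lra.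
Qed.

Lemma continuity_clamp_ext (a b : R) (h h1 : R -> R) :
  a <= b -> (forall y, a <= y <= b -> D_in h h1 (fun z => a <= z <= b) y) ->
  forall y, continuity_pt (fun t => h (clamp a b t)) y.
Proof.
  intros Hab HD y. set (y0 := clamp a b y).
  assert (Hc := cont_deriv _ _ _ _ (HD y0 (clamp_in a b y Hab))).
  unfold continuity_pt, continue_in, limit1_in, limit_in in *; simpl in *; unfold R_dist in *.
  intros eps Heps. destruct (Hc eps Heps) as [del [Hdel Hclose]].
  exists del; split; [assumption|]. intros t [_ Ht].
  destruct (Req_dec (clamp a b t) y0) as [E|E].
  - fold y0; rewrite E, Rminus_diag, Rabs_R0; lra.
  - apply Hclose; split; [split; [apply clamp_in; assumption | auto]|].
    eapply Rle_lt_trans; [apply clamp_lipschitz; assumption | exact Ht].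
Qed.

Lemma derivable_clamp_ext (a b : R) (h h1 : R -> R) (u : R) :
  a < u < b -> D_in h h1 (fun z => a <= z <= b) u ->
  derivable_pt_lim (fun t => h (clamp a b t)) u (h1 u).
Proof.
  intros Hu HD.
  unfold D_in, limit1_in, limit_in, D_x in HD; simpl in HD; unfold R_dist in HD.
  intros eps Heps. destruct (HD eps Heps) as [del [Hdel Hclose]].
  assert (Hpos : 0 < Rmin del (Rmin (u - a) (b - u))) by (repeat apply Rmin_pos; lra).
  exists (mkposreal _ Hpos). intros dh Hdh0 Hdh; simpl in Hdh.
  assert (Hb1 := Rmin_l del (Rmin (u - a) (b - u))).
  assert (Hb2 := Rmin_r del (Rmin (u - a) (b - u))).
  assert (Hb3 := Rmin_l (u - a) (b - u)).
  assert (Hb4 := Rmin_r (u - a) (b - u)).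
  assert (Hr : a <= u + dh <= b /\ Rabs dh < del).
  { revert Hdh; unfold Rabs; destruct Rcase_abs; intros; lra. }
  rewrite (clamp_id a b (u + dh)), (clamp_id a b u) by lra.
  replace dh with (u + dh - u) at 2 by ring.
  apply Hclose; split; [split; lra|].
  replace (u + dh - u) with dh by ring; lra.
Qed.

Lemma derivable_pt_lim_affine (c d s : R) : derivable_pt_lim (fun t => c + t * d) s d.
Proof.
  intros eps Heps. exists (mkposreal eps Heps). intros dh Hdh _.
  replace ((c + (s + dh) * d - (c + s * d)) / dh - d) with 0 by (field; assumption).
  rewrite Rabs_R0; simpl; lra.
Qed.

Lemma derivable_pt_lim_finite_sum (F : nat -> R -> R) (F' : nat -> R) (n : nat) (s : R) :
  (forall i, (i <= n)%nat -> derivable_pt_lim (F i) s (F' i)) ->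
  derivable_pt_lim (fun t => sum_f_R0 (fun i => F i t) n) s (sum_f_R0 F' n).
Proof.
  induction n as [|n IHn]; intros HF; simpl; [apply HF; lia|].
  apply (derivable_pt_lim_plus (fun t => sum_f_R0 (fun i => F i t) n) (F (S n))).
  - apply IHn; intros; apply HF; lia.
  - apply HF; lia.
Qed.

(* Chain rule along the segment from c to y, both in [a,b]: the open segment
   lies in (a,b) unless it is reduced to a point. *)
Lemma derivable_along_segment (a b c y s : R) (h h1 : R -> R) :
  a <= c <= b -> a <= y <= b -> 0 < s < 1 ->
  (forall z, a <= z <= b -> D_in h h1 (fun z => a <= z <= b) z) ->
  derivable_pt_lim (fun t => h (clamp a b (c + t * (y - c)))) s
    (h1 (c + s * (y - c)) * (y - c)).
Proof.
  intros Hc Hy Hs HD.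
  destruct (Req_dec y c) as [->|Hyc].
  - rewrite Rminus_diag, Rmult_0_r.
    apply (derivable_pt_lim_ext (fun _ => h (clamp a b c))).
    { intros t; rewrite Rmult_0_r, Rplus_0_r; reflexivity. }
    apply derivable_pt_lim_const.
  - apply (derivable_pt_lim_comp (fun t => c + t * (y - c)) (fun t => h (clamp a b t))).
    + apply derivable_pt_lim_affine.
    + assert (Hint : a < c + s * (y - c) < b).
      { destruct (Rlt_or_le y c); split; nra. }
      apply derivable_clamp_ext; [exact Hint | apply HD; lra].
Qed.

(* Weighted mean value theorem: if the weights sum to 0, then
   sum w_i h(x_i) = sum w_i (x_i - c) h'(c + xi (x_i - c)) for some 0 < xi < 1;
   apply the mean value theorem to t |-> sum w_i h(c + t (x_i - c)) on [0,1]. *)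
Lemma weighted_mean_value (a b c : R) (n : nat) (x w : nat -> R) (h h1 : R -> R) :
  a <= c <= b -> points_in a b n x -> sum_f_R0 w n = 0 ->
  (forall y, a <= y <= b -> D_in h h1 (fun z => a <= z <= b) y) ->
  exists xi, 0 < xi < 1 /\
    sum_f_R0 (fun i => w i * h (x i)) n =
    sum_f_R0 (fun i => w i * (x i - c) * h1 (c + xi * (x i - c))) n.
Proof.
  intros Hc Hx Hw HD. assert (Hab : a <= b) by lra.
  set (G := fun t => sum_f_R0 (fun i => w i * h (clamp a b (c + t * (x i - c)))) n).
  set (G' := fun s => sum_f_R0 (fun i => w i * (x i - c) * h1 (c + s * (x i - c))) n).
  assert (HG : forall s, 0 < s < 1 -> derivable_pt_lim G s (G' s)).
  { intros s Hs; apply derivable_pt_lim_finite_sum; intros i Hi.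
    replace (w i * (x i - c) * h1 (c + s * (x i - c)))
      with (w i * (h1 (c + s * (x i - c)) * (x i - c))) by ring.
    apply (derivable_pt_lim_scal (fun t => h (clamp a b (c + t * (x i - c))))).
    apply derivable_along_segment; auto. }
  assert (HC : forall s, continuity_pt G s).
  { intros s; apply continuity_pt_finite_SF; intros i Hi.
    apply (continuity_pt_scal (fun t => h (clamp a b (c + t * (x i - c))))).
    apply (continuity_pt_comp (fun t => c + t * (x i - c)) (fun t => h (clamp a b t))).
    - apply derivable_continuous_pt; exists (x i - c); apply derivable_pt_lim_affine.
    - apply (continuity_clamp_ext a b h h1); assumption. }
  destruct (MVT G id 0 1 (fun s P => exist _ (G' s) (HG s P)) (fun s _ => derivable_pt_id s))
    as [xi [Pxi Hxi]];
    [lra | intros; apply HC | intros; apply derivable_continuous_pt, derivable_pt_id|].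
  exists xi; split; [exact Pxi|].
  rewrite derive_pt_id in Hxi; simpl in Hxi; unfold id in Hxi.
  assert (G1 : G 1 = sum_f_R0 (fun i => w i * h (x i)) n).
  { apply sum_eq; intros i Hi. rewrite clamp_id; [f_equal; f_equal; ring|].
    specialize (Hx i Hi); lra. }
  assert (G0 : G 0 = 0).
  { unfold G. rewrite (sum_eq _ (fun i => w i * h (clamp a b c)))
      by (intros; rewrite Rmult_0_l, Rplus_0_r; reflexivity).
    rewrite <- (scal_sum w n (h (clamp a b c))), Hw; ring. }
  rewrite <- G1; unfold G' in Hxi; lra.
Qed.

(* The points c + xi (x_i - c) obtained from the mean value theorem. *)
Definition contract (c xi : R) (x : nat -> R) (i : nat) : R := c + xi * (x i - c).

Lemma contract_decreasing (c xi : R) (n : nat) (x : nat -> R) :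
  0 < xi -> strictly_decreasing n x -> strictly_decreasing n (contract c xi x).
Proof.
  intros Hxi Hx i Hi; unfold contract.
  assert (x (S i) < x i) by (apply Hx; exact Hi); nra.
Qed.

Lemma contract_in (a b c xi : R) (n : nat) (x : nat -> R) :
  a <= c <= b -> 0 <= xi <= 1 -> points_in a b n x -> points_in a b n (contract c xi x).
Proof.
  intros Hc Hxi Hx i Hi; unfold contract.
  specialize (Hx i Hi); split; nra.
Qed.

(* After the mean value step the weights w_i (x_i - c) at the contracted
   points annihilate one degree less: (y - c)(c + xi (y - c))^j is a
   polynomial of degree j + 1 in y. *)
Lemma contract_moments (m n : nat) (c xi : R) (x w : nat -> R) :
  moments_vanish (S m) n x w ->
  moments_vanish m n (contract c xi x) (fun i => w i * (x i - c)).
Proof.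
  intros Hw j Hj; unfold contract.
  set (p := fun y => (1 * y + - c) * (xi * y + (c - xi * c)) ^ j).
  transitivity (sum_f_R0 (fun i => w i * p (x i)) n).
  { apply sum_eq; intros; unfold p.
    replace (xi * x i + (c - xi * c)) with (c + xi * (x i - c)) by ring; ring. }
  apply (poly_annihilated (S j) p (poly_mul_affine _ _ _ _ (poly_affine_pow j _ _)) (S m));
    [lia | exact Hw].
Qed.

Lemma moments_vanish_drop_last (m n : nat) (x w : nat -> R) :
  w (S n) = 0 -> moments_vanish m (S n) x w -> moments_vanish m n x w.
Proof.
  intros H0 Hw j Hj; rewrite <- (Hw j Hj), sum_drop_last; [reflexivity|].
  rewrite H0; ring.
Qed.

Lemma moments_vanish_drop_first (m n : nat) (x w : nat -> R) :
  w 0%nat = 0 -> moments_vanish m (S n) x w ->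
  moments_vanish m n (fun i => x (S i)) (fun i => w (S i)).
Proof.
  intros H0 Hw j Hj; rewrite <- (Hw j Hj), sum_drop_first; [reflexivity|].
  rewrite H0; ring.
Qed.

Lemma moments_vanish_total (m n : nat) (x w : nat -> R) :
  moments_vanish (S m) n x w -> sum_f_R0 w n = 0.
Proof. intros Hw; rewrite <- (Hw 0%nat) by lia; apply sum_eq; intros; simpl; ring. Qed.

(* First case: a nonnegative first weight.  The mean value step is taken at
   the last point c = x_n, whose new weight vanishes. *)
Lemma weighted_sum_nonneg_first (n : nat) : forall (a b : R) (x w : nat -> R) (g : nat -> R -> R),
  strictly_decreasing n x -> points_in a b n x -> 0 <= w 0%nat ->
  moments_vanish n n x w -> derivative_chain n a b g ->
  (forall y, a <= y <= b -> 0 <= g n y) ->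
  0 <= sum_f_R0 (fun i => w i * g 0%nat (x i)) n.
Proof.
  induction n as [|n IHn]; intros a b x w g Hx Hin Hw0 Hw Hg Hpos.
  { simpl; apply Rmult_le_pos; [exact Hw0 | apply Hpos, Hin; lia]. }
  set (c := x (S n)).
  assert (Hc : a <= c <= b) by (apply Hin; lia).
  destruct (weighted_mean_value a b c (S n) x w (g 0%nat) (g 1%nat) Hc Hin
              (moments_vanish_total n (S n) x w Hw))
    as [xi [Hxi ->]]; [intros; apply Hg; auto; lia|].
  rewrite sum_drop_last by (unfold c; ring).
  apply (IHn a b (contract c xi x) (fun i => w i * (x i - c)) (fun i => g (S i))).
  - intros i Hi; apply (contract_decreasing c xi (S n) x); [lra | exact Hx | lia].
  - intros i Hi; apply (contract_in a b c xi (S n)); [exact Hc | lra | exact Hin | lia].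
  - assert (c < x 0%nat) by (apply (strictly_decreasing_lt (S n)); auto; lia).
    apply Rmult_le_pos; lra.
  - apply moments_vanish_drop_last; [unfold c; ring|].
    apply contract_moments; exact Hw.
  - intros i y Hi Hy; apply Hg; [lia | exact Hy].
  - exact Hpos.
Qed.

(* Second case: (-1)^n w_n >= 0.  The mean value step is taken at the first
   point c = x_0; the new weight w_n (x_n - c) has the opposite sign. *)
Lemma weighted_sum_nonneg_last (n : nat) : forall (a b : R) (x w : nat -> R) (g : nat -> R -> R),
  strictly_decreasing n x -> points_in a b n x -> 0 <= (-1) ^ n * w n ->
  moments_vanish n n x w -> derivative_chain n a b g ->
  (forall y, a <= y <= b -> 0 <= g n y) ->
  0 <= sum_f_R0 (fun i => w i * g 0%nat (x i)) n.
Proof.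
  induction n as [|n IHn]; intros a b x w g Hx Hin Hwn Hw Hg Hpos.
  { simpl in *; apply Rmult_le_pos; [lra | apply Hpos, Hin; lia]. }
  set (c := x 0%nat).
  assert (Hc : a <= c <= b) by (apply Hin; lia).
  destruct (weighted_mean_value a b c (S n) x w (g 0%nat) (g 1%nat) Hc Hin
              (moments_vanish_total n (S n) x w Hw))
    as [xi [Hxi ->]]; [intros; apply Hg; auto; lia|].
  rewrite sum_drop_first by (unfold c; ring).
  apply (IHn a b (fun i => contract c xi x (S i)) (fun i => w (S i) * (x (S i) - c))
           (fun i => g (S i))).
  - intros i Hi; apply (contract_decreasing c xi (S n) x); [lra | exact Hx | lia].
  - intros i Hi; apply (contract_in a b c xi (S n)); [exact Hc | lra | exact Hin | lia].
  - assert (x (S n) < c) by (apply (strictly_decreasing_lt (S n)); auto; lia).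
    simpl in Hwn.
    replace ((-1) ^ n * (w (S n) * (x (S n) - c)))
      with ((-1 * (-1) ^ n * w (S n)) * (c - x (S n))) by ring.
    apply Rmult_le_pos; lra.
  - apply (moments_vanish_drop_first n n (contract c xi x) (fun i => w i * (x i - c)));
      [unfold c; ring|].
    apply contract_moments; exact Hw.
  - intros i y Hi Hy; apply Hg; [lia | exact Hy].
  - exact Hpos.
Qed.

(* Splitting of weights on k + 2 points annihilating degrees < k: u is w_0
   times divided-difference weights on x_0, ..., x_k (so u_(k+1) = 0), and
   the rest w - u vanishes at x_0, so it lives on x_1, ..., x_(k+1). *)
Lemma split_weights (k : nat) (x w : nat -> R) :
  strictly_decreasing (S k) x -> moments_vanish k (S k) x w ->
  exists u : nat -> R,
    u 0%nat = w 0%nat /\ u (S k) = 0 /\ moments_vanish k k x u /\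
    moments_vanish k k (fun i => x (S i)) (fun i => w (S i) - u (S i)).
Proof.
  intros Hx Hw.
  destruct (divided_difference_weights k x) as [d [Hd0 Hd]]; [intros i Hi; apply Hx; lia|].
  set (u := fun i => if (i <=? k)%nat then w 0%nat * d i else 0).
  assert (Hu : forall i, (i <= k)%nat -> u i = w 0%nat * d i).
  { intros i Hi; unfold u; replace (i <=? k)%nat with true by (symmetry; apply Nat.leb_le; lia);
    reflexivity. }
  assert (Hu_last : u (S k) = 0).
  { unfold u; replace (S k <=? k)%nat with false by (symmetry; apply Nat.leb_gt; lia);
    reflexivity. }
  assert (Hu_mom : moments_vanish k k x u).
  { intros j Hj.
    rewrite (sum_eq _ (fun i => d i * x i ^ j * w 0%nat)) by (intros; rewrite Hu; auto; ring).
    rewrite <- scal_sum, Hd by exact Hj; ring. }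
  exists u; split; [rewrite Hu, Hd0 by lia; ring|].
  split; [exact Hu_last|]; split; [exact Hu_mom|].
  apply (moments_vanish_drop_first k k x (fun i => w i - u i)); [rewrite Hu, Hd0 by lia; ring|].
  intros j Hj.
  rewrite (sum_eq _ (fun i => w i * x i ^ j - u i * x i ^ j)) by (intros; ring).
  rewrite minus_sum, (Hw j Hj), sum_drop_last, (Hu_mom j Hj) by (rewrite Hu_last; ring).
  ring.
Qed.

Theorem mainTheorem8 (k : nat) (hk : (0 < k)%nat) (a b : R)
  (pt w : nat -> R)
  (hdec : forall i : nat, (i < k + 1)%nat -> pt (S i) < pt i)
  (hin : forall i : nat, (i <= k + 1)%nat -> a <= pt i <= b)
  (hw1 : 0 <= w 0%nat)
  (hwlast : 0 <= (-1) ^ k * w (k + 1)%nat)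
  (hmom : forall j : nat, (j < k)%nat ->
     sum_f_R0 (fun i => w i * pt i ^ j) (k + 1) = 0)
  (f : R -> R) (g : nat -> R -> R)
  (hf : kdiff_on k a b f g)
  (hpos : forall x, a <= x <= b -> 0 <= g k x) :
  0 <= sum_f_R0 (fun i => w i * f (pt i)) (k + 1).
Proof.
  destruct hf as [hg0 hchain].
  rewrite Nat.add_1_r in *.
  rewrite (sum_eq _ (fun i => w i * g 0%nat (pt i))) by (intros; rewrite hg0; auto).
  destruct (split_weights k pt w hdec hmom) as [u [Hu0 [Hu_last [Hu_mom Hv_mom]]]].
  rewrite (sum_eq _ (fun i => u i * g 0%nat (pt i) + (w i - u i) * g 0%nat (pt i)))
    by (intros; ring).
  rewrite plus_sum, sum_drop_last, sum_drop_first by (rewrite ?Hu_last, ?Hu0; ring).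
  apply Rplus_le_le_0_compat.
  - apply (weighted_sum_nonneg_first k a b pt u g); try assumption.
    + intros i Hi; apply hdec; lia.
    + intros i Hi; apply hin; lia.
    + rewrite Hu0; exact hw1.
  - apply (weighted_sum_nonneg_last k a b (fun i => pt (S i)) (fun i => w (S i) - u (S i)) g);
      try assumption.
    + intros i Hi; apply hdec; lia.
    + intros i Hi; apply hin; lia.
    + rewrite Hu_last, Rminus_0_r; exact hwlast.
Qed.
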